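(* $\mathsf{Distinctness}\in\mathsf{dMAM}[O(\log n)]$, where in $\mathsf{Distinctness}$ each node $u$ of the $n$-node communication graph holds a value $a_u\in\{0,1\}^{c\log n}$ (for a fixed constant $c$) and the instance is in the language iff $a_u\neq a_v$ for all distinct nodes $u\neq v$.
   Context: Distributed interactive proofs (model). An instance consists of a connected communication graph $G=(V,E)$ with $|V|=n$, where each node has a unique identifier of $O(\log n)$ bits, knows $n$, knows its own identifier, its local input (if the problem has local inputs), and the identifiers of its neighbours (with an arbitrary port numbering of its incident edges). A prover, who sees the whole instance, interacts with all nodes in $r$ alternating messages. In a verifier (node) message each node independently samples fresh uniformly random bits and sends them to the prover (public coins). In a prover message the prover sends each node a string. Nodes may additionally exchange the strings they received from the prover with their neighbours in $G$. At the end each node deterministically accepts or rejects as a function of its local information, its own random bits, the strings it received from the prover and those its neighbours received; the instance is accepted iff all nodes accept. The proof size is the maximum number of bits in any single message between the prover and any node. A language $\mathcal L$ (set of instances) is in $\mathsf{dIP}[r,\ell]$ if there is an $r$-message protocol of proof size $\ell=\ell(n)$ such that (completeness) for every instance in $\mathcal L$ some prover makes all nodes accept with probability $>2/3$, and (soundness) for every instance not in $\mathcal L$ and every prover, all nodes accept with probability $<1/3$ (probabilities over the nodes' coins). $\mathsf{dAM}[\ell]$, $\mathsf{dMAM}[\ell]$, $\mathsf{dAMAM}[\ell]$, $\mathsf{dMAMAM}[\ell]$ denote the cases of 2, 3, 4, 5 messages, where the letters indicate who sends each message in order (A = nodes send random coins, M = prover). *)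

From mathcomp Require Import all_boot.
Set Implicit Arguments. Unset Strict Implicit. Unset Printing Implicit Defensive.

Definition bits := seq bool.

Record instance (X : nat -> Type) := Inst {
  inst_n : nat;
  inst_adj : rel 'I_inst_n;
  inst_id : 'I_inst_n -> nat;
  inst_input : 'I_inst_n -> X inst_n }.
Arguments inst_n {X} i.
Arguments inst_adj {X} i.
Arguments inst_id {X} i.
Arguments inst_input {X} i.

Definition idbits (kid n : nat) : nat := kid * (trunc_log 2 n).+1.

Definition wf_instance (X : nat -> Type) (kid : nat) (I : instance X) : Prop :=
  [/\ symmetric (inst_adj I), irreflexive (inst_adj I),
      (forall u v, connect (inst_adj I) u v),
      injective (inst_id I) &
      (forall u, inst_id I u < 2 ^ idbits kid (inst_n I))].

(* a port numbering: for every node, a duplicate-free list of its neighbours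
   (port i of u leads to the i-th element of the list) *)
Definition port_numbering (X : nat -> Type) (I : instance X)
  (ports : 'I_(inst_n I) -> seq 'I_(inst_n I)) : Prop :=
  forall u, uniq (ports u) /\ (forall v, (v \in ports u) = inst_adj I u v).

(* Decision function of a node in a 3-message (M A M) protocol, knowing n:
   own identifier, own input, own random bits, own two prover strings,
   and, in port order, (identifier, first prover string, second prover string)
   of each neighbour. *)
Definition decision (X : nat -> Type) (rlen : nat -> nat) :=
  forall n : nat, nat -> X n -> (rlen n).-tuple bool -> bits -> bits ->
    seq (nat * bits * bits) -> bool.

Definition all_accept (X : nat -> Type) (rlen : nat -> nat) (dec : decision X rlen)
  (I : instance X) (ports : 'I_(inst_n I) -> seq 'I_(inst_n I))
  (P1 : 'I_(inst_n I) -> bits)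
  (P2 : {ffun 'I_(inst_n I) -> (rlen (inst_n I)).-tuple bool} -> 'I_(inst_n I) -> bits)
  (r : {ffun 'I_(inst_n I) -> (rlen (inst_n I)).-tuple bool}) : bool :=
  [forall u, dec (inst_n I) (inst_id I u) (inst_input I u) (r u) (P1 u) (P2 r u)
               [seq (inst_id I v, P1 v, P2 r v) | v <- ports u]].

Definition n_accept (X : nat -> Type) (rlen : nat -> nat) (dec : decision X rlen)
  (I : instance X) (ports : 'I_(inst_n I) -> seq 'I_(inst_n I))
  (P1 : 'I_(inst_n I) -> bits)
  (P2 : {ffun 'I_(inst_n I) -> (rlen (inst_n I)).-tuple bool} -> 'I_(inst_n I) -> bits)
  : nat :=
  #|[pred r | all_accept dec ports P1 P2 r]|.

Definition n_coins (rlen : nat -> nat) (n : nat) : nat :=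
  #|{ffun 'I_n -> (rlen n).-tuple bool}|.

(* L in dMAM[ell] (identifiers of kid*(log n + 1) bits). Probabilities:
   accept prob > 2/3  <->  3 * #accepting > 2 * #coins ;
   accept prob < 1/3  <->  3 * #accepting < #coins. *)
Definition dMAM (X : nat -> Type) (kid : nat) (L : instance X -> Prop)
  (ell : nat -> nat) : Prop :=
  exists (rlen : nat -> nat) (dec : decision X rlen),
    (forall n, rlen n <= ell n) /\
    forall (I : instance X), wf_instance kid I ->
    forall ports, port_numbering ports ->
      (L I -> exists (P1 : 'I_(inst_n I) -> bits)
                (P2 : {ffun 'I_(inst_n I) -> (rlen (inst_n I)).-tuple bool} ->
                      'I_(inst_n I) -> bits),
          (forall u, size (P1 u) <= ell (inst_n I)) /\
          (forall r u, size (P2 r u) <= ell (inst_n I)) /\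
          2 * n_coins rlen (inst_n I) < 3 * n_accept dec ports P1 P2)
      /\
      (~ L I -> forall (P1 : 'I_(inst_n I) -> bits)
                  (P2 : {ffun 'I_(inst_n I) -> (rlen (inst_n I)).-tuple bool} ->
                        'I_(inst_n I) -> bits),
          3 * n_accept dec ports P1 P2 < n_coins rlen (inst_n I)).

Definition dMAM_Olog (X : nat -> Type) (kid : nat) (L : instance X -> Prop) : Prop :=
  exists (C : nat) (ell : nat -> nat),
    (forall n, ell n <= C * (trunc_log 2 n).+1) /\ dMAM kid L ell.

Definition dist_input (c : nat) (n : nat) : Type := (c * up_log 2 n).-tuple bool.

Definition distinctness (c : nat) (I : instance (dist_input c)) : Prop :=
  forall u v : 'I_(inst_n I), u != v -> inst_input I u != inst_input I v.

From mathcomp Require Import all_boot all_algebra finfield zify.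
Set Implicit Arguments. Unset Strict Implicit. Unset Printing Implicit Defensive.
Import GRing.Theory.

(* Inputs are embedded in a field [F] with [2 ^ m > 3n] elements.
   The prover first sends every node a claimed BFS spanning tree (root, parent,
   depth) and a value [S_u]; honestly [S] maps each input to the input of next
   larger rank, cyclically.  Each node then tosses [m] coins; the root's coins
   give a point [x] of [F].  Finally the prover sends [x] and, for every node,
   the products of [x - a_w] and of [x - S_w] over its subtree; nodes check
   these products against their children's, and the root checks that the two
   totals agree.

   Soundness: an accepting run forces [prod_u (x - a_u) = prod_u (x - S_u)] at
   the root's coin (the subtree products telescope), while [S_u] has larger
   rank than [a_u] at every non-root node.  If two inputs coincide, the two
   polynomials therefore differ (a rearrangement increasing the rank at all
   points but one forces distinct values), so [x] is one of at most [n] roots,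
   which happens with probability below 1/3.  Completeness: on distinct inputs
   the honest run fails only when [x] is one of the [n] inputs. *)

Fixpoint nat2bits (k x : nat) : bits :=
  if k is k'.+1 then odd x :: nat2bits k' x./2 else [::].

Fixpoint bits2nat (s : bits) : nat :=
  if s is b :: s' then b + (bits2nat s').*2 else 0.

Lemma size_nat2bits k x : size (nat2bits k x) = k.
Proof. by elim: k x => //= k IH x; rewrite IH. Qed.

Lemma nat2bitsK k x : x < 2 ^ k -> bits2nat (nat2bits k x) = x.
Proof.
elim: k x => [|k IH] x /=; first by rewrite expn0; case: x.
move=> hx; rewrite IH ?odd_double_half //.
by rewrite ltn_half_double -mul2n -expnS.
Qed.

Lemma bits2nat_lt s : bits2nat s < 2 ^ size s.
Proof.
elim: s => //= b s IH; rewrite expnS mul2n.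
by case: b => /=; [rewrite add1n ltn_Sdouble | rewrite add0n ltn_double].
Qed.

Lemma bits2nat_inj s t : size s = size t -> bits2nat s = bits2nat t -> s = t.
Proof.
elim: s t => [|b s IH] [|b' t] //= [hs] h.
have eb : b = b'.
  by move: (congr1 odd h); rewrite !oddD !odd_double !oddb !addbF.
move: h; rewrite -eb => h; congr cons; apply: IH => //.
by apply: double_inj; apply/eqP; rewrite -(eqn_add2l b) h.
Qed.

Fixpoint block (W j : nat) (s : bits) : bits :=
  if j is j'.+1 then block W j' (drop W s) else take W s.

Lemma block0 W l r : size l = W -> block W 0 (l ++ r) = l.
Proof. by move=> <- /=; rewrite take_size_cat. Qed.

Lemma blockS W j l r : size l = W -> block W j.+1 (l ++ r) = block W j r.
Proof. by move=> <- /=; rewrite drop_size_cat. Qed.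

Lemma connect_const (T : finType) (e : rel T) (A : Type) (f : T -> A) :
  (forall u v, e u v -> f v = f u) -> forall u v, connect e u v -> f v = f u.
Proof.
move=> h u v /connectP[p hp ->]; elim: p u hp => //= w p IH u /andP[huw hp].
by rewrite (IH w hp); apply: h.
Qed.

Lemma count_enum (T : finType) (P : pred T) : count P (enum T) = #|[pred u | P u]|.
Proof. by rewrite cardE /enum_mem size_filter (@eq_filter _ _ predT) ?filter_predT. Qed.

(* Successor argument: if [s] rearranges the values of [e] and strictly increases
   the key [k] everywhere except at one point at most, then [e] is injective.
   (With threshold [t] the key of a repeated value, fewer nodes have an [s]-key
   below [t] than an [e]-key below [t], contradicting the rearrangement.) *)
Lemma rearrangement_increasing_inj (I : finType) (T : eqType) (k : T -> nat)
    (e s : I -> T) :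
  perm_eq [seq e u | u <- enum I] [seq s u | u <- enum I] ->
  #|[pred u | k (s u) <= k (e u)]| <= 1 -> injective e.
Proof.
move=> hperm few_le u1 u2 e12; apply/eqP/negPn/negP => hne.
set t := k (e u1).
have same_count : #|[pred u | k (e u) <= t]| = #|[pred u | k (s u) <= t]|.
  by move/permP: hperm => /(_ (fun z => k z <= t)); rewrite !count_map -!enumT !count_enum.
pose Lt := [pred u | k (e u) < t].
have below_s : #|[pred u | k (s u) <= t]| <= #|Lt| + 1.
  apply: (@leq_trans (#|Lt| + #|[pred u | k (s u) <= k (e u)]|)); last first.
    by rewrite leq_add2l few_le.
  rewrite -cardUI; apply: leq_trans (leq_addr _ _); apply: subset_leq_card.
  apply/subsetP => u; rewrite !inE => hs; case: leqP => //= hlt.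
  by rewrite (leq_trans hs hlt) ?orbT.
have below_e : #|Lt| + 2 <= #|[pred u | k (e u) <= t]|.
  rewrite -(cardID Lt [pred u | k (e u) <= t]); apply: leq_add.
  - by apply: subset_leq_card; apply/subsetP => u; rewrite !inE => ltu; rewrite ltu (ltnW ltu).
  - have <- : #|[set u1; u2]| = 2 by rewrite cards2 hne.
    apply: subset_leq_card; apply/subsetP => u; rewrite !inE /t.
    by case/orP=> /eqP ->; rewrite ?e12 leqnn ltnn.
by move: below_s below_e; rewrite same_count; lia.
Qed.

Lemma card_ffun_at (I T : finType) (u0 : I) (P : pred T) :
  #|[pred r : {ffun I -> T} | P (r u0)]| = #|[pred t | P t]| * #|T| ^ (#|I|).-1.
Proof.
pose Fm := fun x : I => if x == u0 then [pred t | P t] else [pred t : T | true].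
have -> : #|[pred r : {ffun I -> T} | P (r u0)]| = #|(family Fm : simpl_pred {ffun I -> T})|.
  apply: eq_card => r; rewrite !inE; apply/idP/familyP.
  - by move=> h x; rewrite /Fm; case: eqP => [->|].
  - by move/(_ u0); rewrite /Fm eqxx.
rewrite card_family foldrE big_map big_enum (bigD1 u0) //= /Fm eqxx; congr (_ * _).
rewrite (eq_bigr (fun _ => #|T|)); last by move=> x /negbTE ->; apply: eq_card.
by rewrite prod_nat_const cardC1.
Qed.

Section RootedProducts.
Variables (R : idomainType) (I : finType) (nonroot : pred I) (par : I -> I).
Local Open Scope ring_scope.

Definition child (u v : I) : bool := nonroot v && (par v == u).

Lemma prod_roots_telescope (F w : I -> R) :
  (forall v, nonroot v -> F v != 0) ->
  (forall u, F u = w u * \prod_(v | child u v) F v) ->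
  \prod_(u | ~~ nonroot u) F u = \prod_u w u.
Proof.
move=> F_neq0 F_rec.
have split_all : \prod_u F u = \prod_u w u * \prod_(v | nonroot v) F v.
  rewrite (eq_bigr _ (fun u _ => F_rec u)) big_split /=; congr (_ * _).
  by rewrite [RHS](partition_big par xpredT).
move: split_all; rewrite (bigID nonroot) /= mulrC; apply: mulIf.
by apply/prodf_neq0 => v; apply: F_neq0.
Qed.

Variables (depth : I -> nat) (h : nat).
Hypothesis depth_lt : forall v, (depth v < h)%N.
Hypothesis child_depth : forall u v, child u v -> depth v = (depth u).+1.

Fixpoint subtree_prod_rec (f : I -> R) (k : nat) (u : I) : R :=
  if k is k'.+1 then f u * \prod_(v | child u v) subtree_prod_rec f k' v else 1.

Definition subtree_prod (f : I -> R) (u : I) : R := subtree_prod_rec f h u.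

Lemma subtree_prod_rec_stable f k u :
  (h - depth u <= k)%N -> subtree_prod_rec f k u = subtree_prod_rec f k.+1 u.
Proof.
elim: k u => [|k IH] u hu; first by have := depth_lt u; move: hu; lia.
rewrite [LHS]/= [RHS]/=; congr (_ * _); apply: eq_bigr => v uv.
by apply: IH; have := child_depth uv; have := depth_lt v; move: hu; lia.
Qed.

Lemma subtree_prodE f u :
  subtree_prod f u = f u * \prod_(v | child u v) subtree_prod f v.
Proof. by rewrite /subtree_prod subtree_prod_rec_stable ?leq_subr. Qed.

Lemma subtree_prod_neq0 f u : (forall v, f v != 0) -> subtree_prod f u != 0.
Proof.
move=> f_neq0; rewrite /subtree_prod; elim: h u => [|k IH] u /=; first exact: oner_neq0.
by rewrite mulf_neq0 //; apply/prodf_neq0 => v _; apply: IH.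
Qed.

End RootedProducts.

Section BFS.
Variables (I : finType) (e : rel I) (root : I).
Hypothesis e_sym : symmetric e.
Hypothesis e_conn : forall u v, connect e u v.

Definition reach_in (v : I) (k : nat) : bool :=
  [exists p : k.-tuple I, path e root p && (last root p == v)].

Lemma reach_inP v k :
  reflect (exists p, [/\ path e root p, last root p = v & size p = k]) (reach_in v k).
Proof.
apply: (iffP existsP) => [[p /andP[hp /eqP hl]]|[p [hp hl hs]]].
  by exists (val p); rewrite size_tuple.
have hs' : size p == k by rewrite hs.
by exists (Tuple hs'); rewrite /= hp hl eqxx.
Qed.

Lemma reach_ex v : exists k, reach_in v k.
Proof.
by have /connectP[p hp hl] := e_conn root v; exists (size p); apply/reach_inP; exists p.
Qed.

Definition dist (v : I) : nat := ex_minn (reach_ex v).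

Lemma dist_reach v : reach_in v (dist v).
Proof. by rewrite /dist; case: ex_minnP. Qed.

Lemma dist_min v k : reach_in v k -> dist v <= k.
Proof. by rewrite /dist; case: ex_minnP => m _ hm /hm. Qed.

(* A shortest path is simple, hence has fewer than [#|I|] edges. *)
Lemma dist_lt v : dist v < #|I|.
Proof.
have /connectP[p hp hl] := e_conn root v.
rewrite hl; case: (shortenP hp) => p' hp' hu _.
apply: (@leq_trans (size p').+1).
  by rewrite ltnS; apply: dist_min; apply/reach_inP; exists p'; split.
by rewrite -[(size p').+1]/(size (root :: p')) -(card_uniqP hu) max_card.
Qed.

Lemma dist_eq0 v : (dist v == 0) = (v == root).
Proof.
apply/eqP/eqP => [d0|->].
  by have := dist_reach v; rewrite d0 => /reach_inP[p [_ <- hs]]; case: p hs.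
by apply/eqP; rewrite -leqn0; apply: dist_min; apply/reach_inP; exists [::].
Qed.

Lemma dist_parent v : 0 < dist v -> exists w, e v w && (dist w == (dist v).-1).
Proof.
move=> hv; have /reach_inP[p [hp hl hs]] := dist_reach v.
case/lastP: p hp hl hs => [|q x]; first by move=> _ _ hs; move: hv; rewrite -hs.
rewrite rcons_path last_rcons size_rcons => /andP[hq hx] hxv hs; subst x.
exists (last root q); rewrite e_sym hx /=.
have h1 : dist (last root q) <= size q by apply: dist_min; apply/reach_inP; exists q.
have h2 : size q <= dist (last root q).
  have /reach_inP[q' [hq' hl' hs']] := dist_reach (last root q).
  have : dist v <= size (rcons q' v).
    apply: dist_min; apply/reach_inP; exists (rcons q' v).
    by rewrite rcons_path hq' hl' hx last_rcons.
  by rewrite size_rcons hs' -hs ltnS.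
by rewrite -hs /=; apply/eqP/anti_leq; rewrite h1 h2.
Qed.

Definition bfs_parent (v : I) : I := odflt v [pick w | e v w && (dist w == (dist v).-1)].

Lemma bfs_parentP v :
  dist v != 0 -> e v (bfs_parent v) /\ dist (bfs_parent v) = (dist v).-1.
Proof.
move=> hv; rewrite /bfs_parent; case: pickP => [w /andP[h1 /eqP h2] | hn] //.
have [w hw] : exists w, e v w && (dist w == (dist v).-1) by apply: dist_parent; rewrite lt0n.
by move: (hn w); rewrite hw.
Qed.

End BFS.

Section CyclicSuccessor.
Variables (I : finType) (k : I -> nat).
Hypothesis k_inj : injective k.

Definition next_key (u : I) : I :=
  if [pick v | k u < k v] is Some v0 then [arg min_(v < v0 | k u < k v) k v]
  else [arg min_(v < u) k v].

Lemma next_key_up u v : k u < k v -> k u < k (next_key u) /\ k (next_key u) <= k v.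
Proof.
move=> huv; rewrite /next_key; case: pickP => [v0 hv0 | hn]; last by move: (hn v); rewrite huv.
by case: (@arg_minnP _ v0 (fun w => k u < k w) k hv0) => i hi hmin; split => //; apply: hmin.
Qed.

Lemma next_key_top u : (forall v, k v <= k u) -> forall v, k (next_key u) <= k v.
Proof.
move=> hu v; rewrite /next_key; case: pickP => [v0 hv0 | hn].
  by have := hu v0; rewrite leqNgt hv0.
by case: (@arg_minnP _ u xpredT k isT) => i _ hmin; apply: hmin.
Qed.

Lemma next_key_inj : injective next_key.
Proof.
suff nx_neq u u' : k u < k u' -> next_key u <> next_key u'.
  move=> u u' h; apply: k_inj; case: (ltngtP (k u) (k u')) => // hl.
  - by case: (nx_neq _ _ hl h).
  - by case: (nx_neq _ _ hl (esym h)).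
move=> hl h; have [hu1 hu2] := next_key_up hl.
case: (boolP [exists v, k u' < k v]) => [/existsP[v hv] | hn].
  by have [hu'1 _] := next_key_up hv; move: hu2; rewrite h leqNgt hu'1.
have top : forall v, k v <= k u'.
  by move=> v; rewrite leqNgt; apply/negP => hv; move/negP: hn; apply; apply/existsP; exists v.
by have := next_key_top top u; rewrite -h leqNgt hu1.
Qed.

Lemma next_key_gt (top u : I) :
  (forall v, k v <= k top) -> u != top -> k u < k (next_key u).
Proof.
move=> htop hu; have hl : k u < k top.
  by rewrite ltn_neqAle htop andbT; apply/negP => /eqP /k_inj /eqP; rewrite (negbTE hu).
by case: (next_key_up hl).
Qed.

End CyclicSuccessor.

Definition GF2 (k : nat) : finFieldType := s2val (@pPrimePowerField 2 k.+1 isT isT).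

Lemma card_GF2 k : #|GF2 k| = 2 ^ k.+1.
Proof. by rewrite /GF2; case: (@pPrimePowerField _ _ _ _) => F /= _ ->. Qed.

(* All messages are concatenations of blocks of [wlen n] bits;
   field elements live in [Fn n], of size [2 ^ coin_len n] > 3n, and are
   transmitted through their rank in the enumeration of [Fn n]. *)
Section Protocol.
Variables c kid : nat.

Definition field_deg (n : nat) : nat := c * up_log 2 n + up_log 2 n + 1.
Definition coin_len (n : nat) : nat := (field_deg n).+1.
Definition Fn (n : nat) : finFieldType := GF2 (field_deg n).
Definition wlen (n : nat) : nat := kid * (trunc_log 2 n).+1 + coin_len n.

Definition to_F (n : nat) (b : bits) : Fn n := nth 0%R (enum (Fn n)) (bits2nat b).
Definition rank_F (n : nat) (y : Fn n) : nat := index y (enum (Fn n)).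
Definition of_F (n : nat) (y : Fn n) : bits := nat2bits (wlen n) (rank_F y).
Definition of_nat (n x : nat) : bits := nat2bits (wlen n) x.

(* First prover message: claimed root identifier, parent identifier, depth in
   the spanning tree, and the input value [S] assigned to the node by the
   successor permutation. *)
Definition msg1 (n root par depth : nat) (succ : Fn n) : bits :=
  of_nat n root ++ of_nat n par ++ of_nat n depth ++ of_F succ.
Definition m_root (n : nat) (p : bits) : nat := bits2nat (block (wlen n) 0 p).
Definition m_parent (n : nat) (p : bits) : nat := bits2nat (block (wlen n) 1 p).
Definition m_depth (n : nat) (p : bits) : nat := bits2nat (block (wlen n) 2 p).
Definition m_succ (n : nat) (p : bits) : Fn n := to_F n (block (wlen n) 3 p).

(* Second prover message: the evaluation point, and the products of [x - a_w]
   and of [x - S_w] over the subtree of the node. *)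
Definition msg2 (n : nat) (x fE fS : Fn n) : bits := of_F x ++ of_F fE ++ of_F fS.
Definition m_point (n : nat) (q : bits) : Fn n := to_F n (block (wlen n) 0 q).
Definition m_prodE (n : nat) (q : bits) : Fn n := to_F n (block (wlen n) 1 q).
Definition m_prodS (n : nat) (q : bits) : Fn n := to_F n (block (wlen n) 2 q).

Definition dec : decision (dist_input c) coin_len := fun n i a r p q nbrs =>
  let ch := [seq nb <- nbrs | (m_parent n nb.1.2 == i) && (m_depth n nb.1.2 != 0)] in
  [&& all (fun nb => m_root n nb.1.2 == m_root n p) nbrs,
      all (fun nb => m_point n nb.2 == m_point n q) nbrs,
      (m_depth n p == 0) == (i == m_root n p),
      (m_depth n p == 0) || has (fun nb => (nb.1.1 == m_parent n p) &&
                                   (m_depth n nb.1.2 == (m_depth n p).-1)) nbrs,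
      (m_depth n p == 0) || (rank_F (to_F n a) < rank_F (m_succ n p)),
      (m_prodE n q == (m_point n q - to_F n a) * \prod_(nb <- ch) m_prodE n nb.2)%R,
      (m_prodS n q == (m_point n q - m_succ n p) * \prod_(nb <- ch) m_prodS n nb.2)%R,
      m_prodE n q != 0%R,
      m_prodS n q != 0%R &
      (m_depth n p != 0) || ((m_prodE n q == m_prodS n q) && (m_point n q == to_F n r))].

Lemma size_enum_F n : size (enum (Fn n)) = 2 ^ coin_len n.
Proof. by rewrite -cardE card_GF2. Qed.

Lemma coin_len_le_wlen n : coin_len n <= wlen n.
Proof. exact: leq_addl. Qed.

Lemma rank_F_lt n (y : Fn n) : rank_F y < 2 ^ wlen n.
Proof.
rewrite /rank_F (leq_trans _ (leq_pexp2l _ (coin_len_le_wlen n))) //.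
by rewrite -size_enum_F index_mem mem_enum.
Qed.

Lemma rank_F_inj n : injective (@rank_F n).
Proof.
move=> x y h; rewrite -[x](nth_index 0%R (mem_enum _ x)).
by rewrite -[y](nth_index 0%R (mem_enum _ y)) -/(rank_F x) h.
Qed.

Lemma of_FK n (y : Fn n) : to_F n (of_F y) = y.
Proof. by rewrite /to_F nat2bitsK ?rank_F_lt // /rank_F nth_index // mem_enum. Qed.

Lemma to_F_inj n (s t : bits) :
  size s <= coin_len n -> size s = size t -> to_F n s = to_F n t -> s = t.
Proof.
move=> hs hst h; apply: bits2nat_inj => //.
have lt_enum u : size u <= coin_len n -> bits2nat u < size (enum (Fn n)).
  by move=> hu; rewrite size_enum_F (leq_trans (bits2nat_lt u)) // leq_exp2l.
apply/eqP; rewrite -(nth_uniq 0%R (lt_enum s hs) (lt_enum t _) (enum_uniq (Fn n))) -?hst //.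
exact/eqP.
Qed.

Lemma input_inj n : injective (fun a : dist_input c n => to_F n a).
Proof.
move=> a b h; apply: val_inj; apply: (@to_F_inj n) h; last by rewrite !size_tuple.
by rewrite size_tuple /coin_len /field_deg; lia.
Qed.

Lemma coin_len_big n : 3 * n < 2 ^ coin_len n.
Proof.
have h1 : n <= 2 ^ up_log 2 n by apply: up_logP.
have h2 : 2 ^ (up_log 2 n).+2 <= 2 ^ coin_len n.
  by rewrite leq_exp2l // /coin_len /field_deg; lia.
apply: leq_trans h2; rewrite !expnS.
have : 0 < 2 ^ up_log 2 n by rewrite expn_gt0.
lia.
Qed.

Lemma few_bad_coins n (u0 : 'I_n) (B : pred (Fn n)) :
  #|[pred y | B y]| <= n ->
  3 * #|[pred r : {ffun 'I_n -> (coin_len n).-tuple bool} | B (to_F n (r u0))]|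
    < #|{ffun 'I_n -> (coin_len n).-tuple bool}|.
Proof.
move=> hB; set T := (coin_len n).-tuple bool.
have bad_tuples : #|[pred t : T | B (to_F n t)]| <= n.
  apply: leq_trans hB; rewrite -(@card_in_imset _ _ (fun t : T => to_F n t)).
    by apply: subset_leq_card; apply/subsetP => y /imsetP[t + ->]; rewrite !inE.
  by move=> t1 t2 _ _ /to_F_inj h; apply/val_inj/h; rewrite !size_tuple.
rewrite (card_ffun_at u0 (fun t : T => B (to_F n t))) card_ffun !card_tuple card_bool card_ord.
have n_gt0 : 0 < n := leq_ltn_trans (leq0n u0) (ltn_ord u0).
set A := (2 ^ coin_len n) ^ n.-1; have A_gt0 : 0 < A by rewrite !expn_gt0.
have -> : (2 ^ coin_len n) ^ n = 2 ^ coin_len n * A by rewrite /A -expnS prednK.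
apply: (@leq_ltn_trans (3 * n * A)); first by rewrite mulnA leq_mul2r leq_mul2l bad_tuples !orbT.
by rewrite ltn_pmul2r // coin_len_big.
Qed.

Lemma size_of_nat n x : size (of_nat n x) = wlen n.
Proof. exact: size_nat2bits. Qed.

Lemma size_of_F n (y : Fn n) : size (of_F y) = wlen n.
Proof. exact: size_nat2bits. Qed.

Lemma size_msg1 n a b d (y : Fn n) : size (msg1 a b d y) = 4 * wlen n.
Proof. by rewrite !size_cat size_of_F !size_of_nat; lia. Qed.

Lemma size_msg2 n (x fE fS : Fn n) : size (msg2 x fE fS) = 3 * wlen n.
Proof. by rewrite !size_cat !size_of_F; lia. Qed.

Section Decoding.
Variables (n a b d : nat) (y x fE fS : Fn n).
Hypotheses (ha : a < 2 ^ wlen n) (hb : b < 2 ^ wlen n) (hd : d < 2 ^ wlen n).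

Lemma m_root_msg1 : m_root n (msg1 a b d y) = a.
Proof. by rewrite /m_root block0 ?size_of_nat // nat2bitsK. Qed.

Lemma m_parent_msg1 : m_parent n (msg1 a b d y) = b.
Proof. by rewrite /m_parent blockS ?size_of_nat // block0 ?size_of_nat // nat2bitsK. Qed.

Lemma m_depth_msg1 : m_depth n (msg1 a b d y) = d.
Proof. by rewrite /m_depth !blockS ?size_of_nat // block0 ?size_of_nat // nat2bitsK. Qed.

Lemma m_succ_msg1 : m_succ n (msg1 a b d y) = y.
Proof. by rewrite /m_succ !blockS ?size_of_nat //= take_oversize ?size_of_F // of_FK. Qed.

Lemma m_point_msg2 : m_point n (msg2 x fE fS) = x.
Proof. by rewrite /m_point block0 ?size_of_F // of_FK. Qed.

Lemma m_prodE_msg2 : m_prodE n (msg2 x fE fS) = fE.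
Proof. by rewrite /m_prodE blockS ?size_of_F // block0 ?size_of_F // of_FK. Qed.

Lemma m_prodS_msg2 : m_prodS n (msg2 x fE fS) = fS.
Proof. by rewrite /m_prodS !blockS ?size_of_F //= take_oversize ?size_of_F // of_FK. Qed.

End Decoding.

End Protocol.

Section Soundness.
Variables (c kid : nat) (I : instance (dist_input c)).
Hypothesis hwf : wf_instance kid I.
Variable ports : 'I_(inst_n I) -> seq 'I_(inst_n I).
Hypothesis hpn : port_numbering ports.
Variable P1 : 'I_(inst_n I) -> bits.
Variable P2 : {ffun 'I_(inst_n I) -> (coin_len c (inst_n I)).-tuple bool} ->
              'I_(inst_n I) -> bits.

Local Notation N := (inst_n I).
Local Notation V := ('I_(inst_n I)).
Local Notation ID := (inst_id I).
Local Notation adj := (inst_adj I).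
Local Notation F := (Fn c (inst_n I)).
Local Notation Coins := {ffun 'I_(inst_n I) -> (coin_len c (inst_n I)).-tuple bool}.

Definition accepts (r : Coins) (u : V) : bool :=
  @dec c kid N (ID u) (inst_input I u) (r u) (P1 u) (P2 r u)
    [seq (ID v, P1 v, P2 r v) | v <- ports u].

Definition val_in (u : V) : F := to_F c N (inst_input I u).
Definition val_succ (u : V) : F := m_succ c kid N (P1 u).
Definition depth (u : V) : nat := m_depth c kid N (P1 u).
Definition nonroot (u : V) : bool := depth u != 0.
Definition claimed_parent (v : V) : V := odflt v [pick w | ID w == m_parent c kid N (P1 v)].
Definition point (r : Coins) (u : V) : F := m_point c kid N (P2 r u).
Definition prodE (r : Coins) (u : V) : F := m_prodE c kid N (P2 r u).
Definition prodS (r : Coins) (u : V) : F := m_prodS c kid N (P2 r u).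

Lemma adj_ports u v : (v \in ports u) = adj u v.
Proof. by case: (hpn u) => _ ->. Qed.

(* A big operation over the neighbour entries that pass the child test is one
   over the corresponding nodes, since ports are duplicate-free. *)
Lemma big_children (R : Type) (idx : R) (op : Monoid.com_law idx) (r : Coins) u
    (G : bits -> R) :
  \big[op/idx]_(nb <- [seq nb <- [seq (ID v, P1 v, P2 r v) | v <- ports u] |
        (m_parent c kid N nb.1.2 == ID u) && (m_depth c kid N nb.1.2 != 0)]) G nb.2 =
  \big[op/idx]_(v | (v \in ports u) &&
        ((m_parent c kid N (P1 v) == ID u) && (depth v != 0))) G (P2 r v).
Proof.
rewrite filter_map big_map big_uniq ?filter_uniq ?(hpn u).1 //.
by apply: eq_bigl => v; rewrite mem_filter andbC.
Qed.

Lemma accepts_tree r u : accepts r u ->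
  [/\ (forall v, adj u v -> m_root c kid N (P1 v) = m_root c kid N (P1 u)),
      (forall v, adj u v -> point r v = point r u),
      (depth u == 0) = (ID u == m_root c kid N (P1 u)),
      (nonroot u -> exists2 w, adj u w &
         (ID w == m_parent c kid N (P1 u)) && (depth w == (depth u).-1)) &
      (nonroot u -> rank_F (val_in u) < rank_F (val_succ u))].
Proof.
rewrite /accepts /dec => /and5P[h1 h2 /eqP h3 h4 /and5P[h5 _ _ _ _]]; split => //.
- by move=> v; rewrite -adj_ports; move: h1; rewrite all_map => /allP h /h /eqP.
- by move=> v; rewrite -adj_ports; move: h2; rewrite all_map => /allP h /h /eqP.
- move=> /negbTE hd; move: h4; rewrite hd /= has_map => /hasP[w hw /= hh].
  by exists w; rewrite -?adj_ports.
- by move=> /negbTE hd; move: h5; rewrite hd.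
Qed.

Lemma accepts_products r u : accepts r u ->
  let ch v := (v \in ports u) && ((m_parent c kid N (P1 v) == ID u) && (depth v != 0)) in
  [/\ prodE r u = (point r u - val_in u) * \prod_(v | ch v) prodE r v,
      prodS r u = (point r u - val_succ u) * \prod_(v | ch v) prodS r v,
      prodE r u != 0, prodS r u != 0 &
      (depth u = 0 -> prodE r u = prodS r u /\ point r u = to_F c N (r u))]%R.
Proof.
rewrite /accepts /dec => /and5P[_ _ _ _ /and5P[_ /eqP hE /eqP hS hE0 /andP[hS0 hroot]]].
split => //.
- by rewrite /prodE hE big_children.
- by rewrite /prodS hS big_children.
- move=> d0; move: hroot; rewrite /depth in d0; rewrite d0 eqxx.
  by rewrite /prodE /prodS /point => /andP[/eqP -> /eqP ->].
Qed.

Section Accepting.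
Variable r : Coins.
Hypothesis acc : forall u, accepts r u.

Let adj_sym : symmetric adj := match hwf with And5 h _ _ _ _ => h end.
Let adj_conn : forall u v, connect adj u v := match hwf with And5 _ _ h _ _ => h end.
Let ID_inj : injective ID := match hwf with And5 _ _ _ h _ => h end.

(* Neighbours agree on the point, hence all nodes do. *)
Lemma point_const u v : point r v = point r u.
Proof.
apply: (connect_const (e := adj)) (adj_conn u v) => x y.
by have [_ h _ _ _] := accepts_tree (acc x); apply: h.
Qed.

(* All nodes claim the same root, so at most one node claims depth 0. *)
Lemma depth0_unique v w : depth v = 0 -> depth w = 0 -> v = w.
Proof.
have root_const x y : m_root c kid N (P1 y) = m_root c kid N (P1 x).
  apply: (connect_const (f := fun z => m_root c kid N (P1 z))) (adj_conn x y) => x' y'.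
  by have [h _ _ _ _] := accepts_tree (acc x'); apply: h.
move=> dv dw; apply: ID_inj.
have [_ _ + _ _] := accepts_tree (acc v); have [_ _ + _ _] := accepts_tree (acc w).
by rewrite dv dw eqxx => /esym/eqP -> /esym/eqP ->.
Qed.

(* A node of minimal depth has no parent, so it has depth 0. *)
Lemma depth0_exists (u1 : V) : exists u0, depth u0 = 0.
Proof.
have [u0 _ hmin] := @arg_minnP _ u1 xpredT depth isT.
exists u0; apply/eqP/negPn/negP => hd.
have [_ _ _ /(_ hd) [w _ /andP[_ /eqP hw]] _] := accepts_tree (acc u0).
by have := hmin w isT; rewrite hw; move: hd; case: (depth u0) => // d _; rewrite ltnn.
Qed.

Lemma accepting_children u v :
  (v \in ports u) && ((m_parent c kid N (P1 v) == ID u) && (depth v != 0)) =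
  child nonroot claimed_parent u v.
Proof.
rewrite /child /nonroot; case hd: (depth v != 0); last by rewrite !andbF.
have [_ _ _ /(_ hd) [w hw /andP[/eqP hwid _]] _] := accepts_tree (acc v).
rewrite /claimed_parent; case: pickP => [w' /eqP hw' | hn]; last by move: (hn w); rewrite hwid eqxx.
have -> : w' = w by apply: ID_inj; rewrite hw' hwid.
rewrite andbT -hwid (inj_eq ID_inj) adj_ports.
by case: eqP => [<-|]; rewrite ?andbF // adj_sym hw.
Qed.

Lemma accepting_identity u0 : depth u0 = 0 ->
  (\prod_u (to_F c N (r u0) - val_in u) = \prod_u (to_F c N (r u0) - val_succ u))%R.
Proof.
move=> d0.
have is_root u : ~~ nonroot u = (u == u0).
  by rewrite /nonroot negbK; apply/eqP/eqP => [du | ->] //; apply: depth0_unique.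
(* Both subtree products telescope to the full product at the root. *)
have telescope (G : Coins -> V -> F) (w : V -> F) :
    (forall u, G r u != 0)%R ->
    (forall u, G r u = (point r u - w u) * \prod_(v | child nonroot claimed_parent u v) G r v)%R ->
    (\prod_u (to_F c N (r u0) - w u) = G r u0)%R.
  move=> G0 Grec; have := prod_roots_telescope (fun v _ => G0 v) Grec.
  rewrite (big_pred1 u0 is_root) => ->; apply: eq_bigr => u _.
  have [_ _ _ _ /(_ d0) [_ <-]] := accepts_products (acc u0).
  by rewrite (point_const u0 u).
have prod_rec (G : Coins -> V -> F) w u :
  (G r u = (point r u - w u) * \prod_(v | (v \in ports u) &&
     ((m_parent c kid N (P1 v) == ID u) && (depth v != 0))) G r v)%R ->
  (G r u = (point r u - w u) * \prod_(v | child nonroot claimed_parent u v) G r v)%R.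
  by rewrite (eq_bigl _ _ (accepting_children u)).
rewrite (telescope prodE val_in) ?(telescope prodS val_succ).
- by have [_ _ _ _ /(_ d0) []] := accepts_products (acc u0).
- by move=> u; have [_ _ _ ->] := accepts_products (acc u).
- by move=> u; apply: prod_rec; have [_ -> _ _] := accepts_products (acc u).
- by move=> u; have [_ _ -> _] := accepts_products (acc u).
- by move=> u; apply: prod_rec; have [-> _ _ _] := accepts_products (acc u).
Qed.

End Accepting.

Definition disc_poly : {poly F} :=
  (\prod_(u : V) ('X - (val_in u)%:P) - \prod_(u : V) ('X - (val_succ u)%:P))%R.

Lemma root_disc_poly x :
  root disc_poly x = (\prod_u (x - val_in u) == \prod_u (x - val_succ u))%R.
Proof.
rewrite /root /disc_poly hornerD hornerN !horner_prod subr_eq0.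
by under eq_bigr do rewrite hornerXsubC; under [X in _ == X]eq_bigr do rewrite hornerXsubC.
Qed.

Lemma card_roots_disc_poly :
  disc_poly != 0%R -> #|[pred y : F | root disc_poly y]| <= N.
Proof.
move=> hq.
have size_disc : size disc_poly <= N.+1.
  rewrite (leq_trans (size_polyD _ _)) // size_polyN -!big_enum /=.
  by rewrite !size_prod_XsubC size_enum_ord maxnn.
have all_roots : all (root disc_poly) (enum [pred y : F | root disc_poly y]).
  by apply/allP => y; rewrite mem_enum.
have := max_poly_roots hq all_roots (enum_uniq _); rewrite -cardE => h.
by rewrite -ltnS (leq_trans h).
Qed.

(* With two equal inputs, an accepting run makes the two polynomials differ:
   otherwise [val_succ] rearranges [val_in] while increasing the rank at every
   non-root node, which forces the inputs to be distinct. *)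
Lemma disc_poly_neq0 r : (forall u, accepts r u) -> ~ distinctness I -> disc_poly != 0%R.
Proof.
move=> acc hnd; apply/negP => /eqP disc0; apply: hnd => u v.
suff in_inj : injective val_in by apply/contra_neq => eq_uv; apply: in_inj; rewrite /val_in eq_uv.
apply: (@rearrangement_increasing_inj _ _ (@rank_F c N) _ val_succ).
- apply: prod_XsubC_eq; rewrite !big_map -enumT !big_enum /=.
  by apply/eqP; rewrite -subr_eq0; apply/eqP.
- apply/card_le1_eqP => x y; rewrite !inE => hx hy.
  have at_root z : rank_F (val_succ z) <= rank_F (val_in z) -> depth z = 0.
    move=> hz; apply/eqP/negPn/negP => nz.
    by have [_ _ _ _ /(_ nz)] := accepts_tree (acc z); rewrite ltnNge hz.
  exact: (depth0_unique acc (at_root y hy) (at_root x hx)).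
Qed.

Lemma soundness :
  ~ distinctness I -> 3 * n_accept (@dec c kid) ports P1 P2 < n_coins (coin_len c) N.
Proof.
move=> hnd; rewrite /n_accept /n_coins.
case: (posnP #|[pred r | all_accept (@dec c kid) ports P1 P2 r]|) => [-> | ].
  by rewrite muln0 card_ffun expn_gt0 card_tuple card_bool expn_gt0.
move/card_gt0P => [r0]; rewrite inE => /forallP acc0.
have u1 : V.
  case: (posnP N) => [N0 | N_gt0]; last exact: Ordinal N_gt0.
  by exfalso; apply: hnd => u; have : u < 0 by rewrite -N0.
(* The root [u0] of one accepting run is determined by the first message, so
   every accepting run has a coin at [u0] that is a root of [disc_poly]. *)
have [u0 d0] := depth0_exists acc0 u1.
apply: leq_ltn_trans (few_bad_coins u0 (card_roots_disc_poly (disc_poly_neq0 acc0 hnd))).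
rewrite leq_mul2l; apply/orP; right; apply: subset_leq_card; apply/subsetP => r.
by rewrite !inE => /forallP acc; rewrite root_disc_poly (accepting_identity acc d0).
Qed.

End Soundness.

(* Completeness: the honest prover roots a BFS tree at the node of largest input
   rank, assigns to each node the input of the node of next larger rank (the
   largest wraps around to the smallest) and sends the true subtree products;
   the only failure is a root coin hitting one of the [n] inputs. *)
Section Completeness.
Variables (c kid : nat) (I : instance (dist_input c)).
Hypothesis hwf : wf_instance kid I.
Variable ports : 'I_(inst_n I) -> seq 'I_(inst_n I).
Hypothesis hpn : port_numbering ports.
Hypothesis hdist : distinctness I.

Local Notation N := (inst_n I).
Local Notation V := ('I_(inst_n I)).
Local Notation ID := (inst_id I).
Local Notation adj := (inst_adj I).
Local Notation F := (Fn c (inst_n I)).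
Local Notation Coins := {ffun 'I_(inst_n I) -> (coin_len c (inst_n I)).-tuple bool}.

Let adj_sym : symmetric adj := match hwf with And5 h _ _ _ _ => h end.
Let adj_conn : forall u v, connect adj u v := match hwf with And5 _ _ h _ _ => h end.
Let ID_inj : injective ID := match hwf with And5 _ _ _ h _ => h end.
Let ID_lt : forall u, ID u < 2 ^ idbits kid N := match hwf with And5 _ _ _ _ h => h end.

Definition in_rank (u : V) : nat := rank_F (val_in u).

Lemma in_rank_inj : injective in_rank.
Proof.
move=> u v /rank_F_inj /input_inj eq_in; apply/eqP/negPn/negP => huv.
by move: (hdist huv); rewrite eq_in eqxx.
Qed.

Variable u1 : V.

Definition top : V := [arg max_(u > u1) in_rank u].

Lemma top_max u : in_rank u <= in_rank top.
Proof. by rewrite /top; case: (@arg_maxnP _ u1 xpredT in_rank isT) => i _ /(_ u isT). Qed.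

Definition succ_in (u : V) : F := val_in (next_key in_rank u).
Definition depth_h (v : V) : nat := dist top adj_conn v.
Definition parent_h (v : V) : V := bfs_parent top adj_conn v.
Definition nonroot_h (v : V) : bool := depth_h v != 0.

Lemma depth_h_lt v : depth_h v < N.
Proof. by have := dist_lt top adj_conn v; rewrite card_ord. Qed.

Lemma depth_h_eq0 v : (depth_h v == 0) = (v == top).
Proof. exact: dist_eq0. Qed.

Lemma parent_hP v :
  nonroot_h v -> adj v (parent_h v) /\ depth_h (parent_h v) = (depth_h v).-1.
Proof. exact: bfs_parentP. Qed.

Lemma child_depth_h u v : child nonroot_h parent_h u v -> depth_h v = (depth_h u).+1.
Proof.
move=> /andP[hv /eqP <-]; have [_ ->] := parent_hP hv.
by move: hv; rewrite /nonroot_h; case: (depth_h v).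
Qed.

Definition P1h (v : V) : bits :=
  msg1 kid (ID top) (ID (parent_h v)) (depth_h v) (succ_in v).

Definition point_h (r : Coins) : F := to_F c N (r top).
Definition prod_h (r : Coins) (g : V -> F) : V -> F :=
  subtree_prod nonroot_h parent_h N (fun v => point_h r - g v)%R.
Definition P2h (r : Coins) (v : V) : bits :=
  msg2 kid (point_h r) (prod_h r (@val_in c I) v) (prod_h r succ_in v).

Lemma lt_wlen_id u : ID u < 2 ^ wlen c kid N.
Proof. by rewrite (leq_trans (ID_lt u)) // leq_exp2l // leq_addr. Qed.

Lemma lt_wlen_depth v : depth_h v < 2 ^ wlen c kid N.
Proof.
apply: (leq_trans (depth_h_lt v)); apply: (@leq_trans (3 * N)); first by rewrite leq_pmull.
by rewrite ltnW // (leq_trans (coin_len_big c N)) // leq_exp2l // coin_len_le_wlen.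
Qed.

Lemma P1h_root v : m_root c kid N (P1h v) = ID top.
Proof. exact/m_root_msg1/lt_wlen_id. Qed.

Lemma P1h_parent v : m_parent c kid N (P1h v) = ID (parent_h v).
Proof. exact/m_parent_msg1/lt_wlen_id. Qed.

Lemma P1h_depth v : m_depth c kid N (P1h v) = depth_h v.
Proof. exact/m_depth_msg1/lt_wlen_depth. Qed.

Lemma P1h_succ v : m_succ c kid N (P1h v) = succ_in v.
Proof. exact: m_succ_msg1. Qed.

Lemma honest_children u v :
  (v \in ports u) && ((m_parent c kid N (P1h v) == ID u) && (m_depth c kid N (P1h v) != 0)) =
  child nonroot_h parent_h u v.
Proof.
rewrite P1h_parent P1h_depth /child /nonroot_h (inj_eq ID_inj).
case: eqP => [<-|]; last by rewrite !andbF.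
rewrite !andbT andbC; case hv: (depth_h v != 0) => //=.
have [par_adj _] := parent_hP hv.
by case: (hpn (parent_h v)) => _ ->; rewrite adj_sym.
Qed.

Lemma P2h_point r v : m_point c kid N (P2h r v) = point_h r.
Proof. exact: m_point_msg2. Qed.

Lemma P2h_prodE r v : m_prodE c kid N (P2h r v) = prod_h r (@val_in c I) v.
Proof. exact: m_prodE_msg2. Qed.

Lemma P2h_prodS r v : m_prodS c kid N (P2h r v) = prod_h r succ_in v.
Proof. exact: m_prodS_msg2. Qed.

Lemma prod_hE r g u :
  prod_h r g u = ((point_h r - g u) * \prod_(v | child nonroot_h parent_h u v) prod_h r g v)%R.
Proof. exact: subtree_prodE depth_h_lt child_depth_h _ u. Qed.

Section GoodCoins.
Variable r : Coins.
Hypothesis point_fresh : forall v, point_h r != val_in v.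

Lemma point_fresh_succ v : point_h r != succ_in v.
Proof. exact: point_fresh. Qed.

Lemma prod_h_neq0 g u : (forall v, point_h r != g v) -> prod_h r g u != 0%R.
Proof. by move=> fresh; apply: subtree_prod_neq0 => v; rewrite subr_eq0. Qed.

Lemma prod_h_top g : (forall v, point_h r != g v) ->
  prod_h r g top = (\prod_u (point_h r - g u))%R.
Proof.
move=> fresh; have is_top u : ~~ nonroot_h u = (u == top) by rewrite negbK depth_h_eq0.
have := prod_roots_telescope (fun v _ => prod_h_neq0 v fresh) (prod_hE r g).
by rewrite (big_pred1 top is_top).
Qed.

(* Since the successor map is a permutation, both root products agree. *)
Lemma prod_h_top_eq : prod_h r (@val_in c I) top = prod_h r succ_in top.
Proof.
rewrite !prod_h_top //; last exact: point_fresh_succ.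
by rewrite /succ_in (reindex_inj (next_key_inj in_rank_inj)).
Qed.

Lemma honest_accepts : all_accept (@dec c kid) ports P1h P2h r.
Proof.
have dist_top u : (depth_h u == 0) = (ID u == ID top) by rewrite depth_h_eq0 (inj_eq ID_inj).
have children g (G : bits -> F) : (forall v, G (P2h r v) = prod_h r g v) -> forall u,
  (\prod_(nb <- [seq nb <- [seq (ID v, P1h v, P2h r v) | v <- ports u] |
     (m_parent c kid N nb.1.2 == ID u) && (m_depth c kid N nb.1.2 != 0)]) G nb.2 =
   \prod_(v | child nonroot_h parent_h u v) prod_h r g v)%R.
  move=> hG u; rewrite (big_children kid hpn P1h P2h) (eq_bigl _ _ (honest_children u)).
  by apply: eq_bigr => v _; rewrite hG.
apply/forallP => u; rewrite /dec P1h_root P1h_depth P1h_succ !P2h_point P2h_prodE P2h_prodS.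
apply/and5P; split.
- by rewrite all_map; apply/allP => v _ /=; rewrite P1h_root.
- by rewrite all_map; apply/allP => v _ /=; rewrite P2h_point.
- by rewrite dist_top.
- case hu: (depth_h u == 0) => //=; have [par_adj par_depth] := parent_hP (negbT hu).
  rewrite has_map; apply/hasP; exists (parent_h u); first by case: (hpn u) => _ ->.
  by rewrite /= P1h_parent P1h_depth par_depth !eqxx.
apply/and5P; split.
- case hu: (depth_h u == 0) => //=; change (in_rank u < in_rank (next_key in_rank u)).
  by apply: (next_key_gt in_rank_inj top_max); rewrite -depth_h_eq0 hu.
- by rewrite (children _ _ (P2h_prodE r)) prod_hE.
- by rewrite (children _ _ (P2h_prodS r)) prod_hE.
- exact: prod_h_neq0.
apply/andP; split; first exact/prod_h_neq0/point_fresh_succ.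
case hu: (depth_h u != 0) => //=; move/negbFE: hu; rewrite depth_h_eq0 => /eqP ->.
by rewrite prod_h_top_eq !eqxx.
Qed.

End GoodCoins.

(* The honest prover fails only when the root's coin is one of the [n] inputs. *)
Lemma honest_success : 2 * n_coins (coin_len c) N < 3 * n_accept (@dec c kid) ports P1h P2h.
Proof.
pose B := [pred y : F | [exists v, y == val_in v]].
have few_B : #|[pred y | B y]| <= N.
  apply: (@leq_trans #|[set val_in v | v : V]|).
    by apply/subset_leq_card/subsetP => y; rewrite !inE => /existsP[v /eqP ->]; apply: imset_f.
  by rewrite (leq_trans (leq_imset_card _ _)) // card_ord.
have good : #|[pred r : Coins | ~~ B (to_F c N (r top))]| <= n_accept (@dec c kid) ports P1h P2h.
  apply: subset_leq_card; apply/subsetP => r; rewrite !inE => fresh.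
  apply: honest_accepts => v; apply: contra fresh => /eqP eq_v.
  by apply/existsP; exists v; apply/eqP.
have total : #|[pred r : Coins | B (to_F c N (r top))]| +
             #|[pred r : Coins | ~~ B (to_F c N (r top))]| = #|Coins|.
  by rewrite -(cardC [pred r : Coins | B (to_F c N (r top))]); congr (_ + _); apply: eq_card.
have := few_bad_coins top few_B; rewrite /n_coins; lia.
Qed.

End Completeness.

(* Completeness for every instance, including the empty one. *)
Lemma completeness c kid (I : instance (dist_input c))
    (ports : 'I_(inst_n I) -> seq 'I_(inst_n I)) :
  wf_instance kid I -> port_numbering ports -> distinctness I ->
  exists (P1 : 'I_(inst_n I) -> bits)
         (P2 : {ffun 'I_(inst_n I) -> (coin_len c (inst_n I)).-tuple bool} ->
               'I_(inst_n I) -> bits),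
    [/\ forall u, size (P1 u) <= 4 * wlen c kid (inst_n I),
        forall r u, size (P2 r u) <= 4 * wlen c kid (inst_n I) &
        2 * n_coins (coin_len c) (inst_n I) < 3 * n_accept (@dec c kid) ports P1 P2].
Proof.
move=> hwf hpn hdist; case: (posnP (inst_n I)) => [N0 | N_gt0].
  exists (fun _ => [::]), (fun _ _ => [::]); split => //.
  have one_coin : n_coins (coin_len c) (inst_n I) = 1 by rewrite /n_coins card_ffun card_ord N0.
  suff -> : n_accept (@dec c kid) ports (fun _ => [::]) (fun _ _ => [::]) = 1 by rewrite one_coin.
  rewrite /n_accept -one_coin /n_coins; apply: eq_card => r; rewrite !inE.
  by apply/forallP => u; have : u < 0 by rewrite -N0.
exists (P1h hwf (Ordinal N_gt0)), (P2h hwf (Ordinal N_gt0)); split.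
- by move=> u; rewrite size_msg1.
- by move=> r u; rewrite size_msg2 leq_mul2r orbT.
- exact: honest_success.
Qed.

Lemma wlen_bound c kid n : 4 * wlen c kid n <= 4 * (kid + c + 3) * (trunc_log 2 n).+1.
Proof.
rewrite /wlen /coin_len /field_deg.
have up_le : up_log 2 n <= (trunc_log 2 n).+1.
  by apply: up_log_min => //; apply/ltnW/trunc_log_ltn.
have := leq_mul2l c (up_log 2 n) (trunc_log 2 n).+1; rewrite up_le orbT; nia.
Qed.

Theorem mainTheorem6 (c kid : nat) :
  dMAM_Olog kid (distinctness (c := c)).
Proof.
exists (4 * (kid + c + 3)), (fun n => 4 * wlen c kid n); split; first exact: wlen_bound.
exists (coin_len c), (@dec c kid); split.
  by move=> n; rewrite (leq_trans (coin_len_le_wlen c kid n)) // leq_pmull.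
move=> I hwf ports hpn; split.
- by case/(completeness hwf hpn) => P1 [P2 [? ? ?]]; exists P1, P2.
- by move=> hnd P1 P2; apply: soundness.
Qed.
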